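(* Let $\Gamma$ be finite. For every directed edge $\epsilon\in\vec E$, as operators on $\mathcal H$, $$[\ell(\epsilon),JX_\epsilon J]=-\frac{1}{\sqrt[4]{\mu(s(\epsilon))^3\mu(t(\epsilon))}}\,|s(\epsilon)\rangle\langle t(\epsilon)|,$$ and $[\ell(\epsilon),JX_{\epsilon'}J]=0$ whenever $\epsilon'\in\vec E$, $\epsilon'\neq\epsilon$.
   Context: $\Gamma$ is a finite connected undirected graph (loops, multiple edges allowed), vertex set $V$, weighting $\mu:V\to(0,\infty)$. Directed version $\vec\Gamma$: each edge with distinct endpoints $\alpha\ne\beta$ yields $\epsilon,\epsilon^{op}$ with $s(\epsilon)=t(\epsilon^{op})=\alpha$, $t(\epsilon)=s(\epsilon^{op})=\beta$; each loop yields one directed loop $\epsilon=\epsilon^{op}$. $\mathcal C=C_0(V)$, $p_\alpha$ indicator of $\alpha$; $\mathcal X$ the Hilbert $\mathcal C$-$\mathcal C$ bimodule spanned by directed edges with $p_\alpha\epsilon=\delta_{s(\epsilon),\alpha}\epsilon$, $\epsilon p_\alpha=\delta_{t(\epsilon),\alpha}\epsilon$, $\langle\epsilon'|\epsilon\rangle=\delta_{\epsilon,\epsilon'}p_{t(\epsilon)}$; $\mathcal F(\mathcal X)$ its full Fock space with creation operators $\ell(\xi)$. For a loop $e$: $X_e=\ell(\epsilon)+\ell(\epsilon)^*$; for $e$ with endpoints $\alpha\ne\beta$: $a_\epsilon=(\mu(\alpha)/\mu(\beta))^{1/4}$, $X_e=a_\epsilon\ell(\epsilon)+a_\epsilon^{-1}\ell(\epsilon^{op})^*+a_\epsilon^{-1}\ell(\epsilon^{op})+a_\epsilon\ell(\epsilon)^*$;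 $X_\epsilon=p_{s(\epsilon)}X_ep_{t(\epsilon)}$. $\mathcal S(\Gamma,\mu)$ is the C$^*$-algebra generated by $\mathcal C$ and the $X_e$; $\mathrm{Tr}=\mathrm{tr}\circ E$ with $E(x)=PxP$, $\mathrm{tr}(p_v)=\mu(v)$. $\mathcal H=L^2(\mathcal S(\Gamma,\mu),\mathrm{Tr})\cong\mathcal F(\mathcal X)\otimes_{\mathcal C}\ell^2(V,\mu)$, with inner product linear in the right variable. $\mathcal H$ has an orthogonal spanning set consisting of the vertices $\gamma\in V$ (the vectors $\widehat{p_\gamma}$, paths of length 0) and the paths $\epsilon_1\cdots\epsilon_n$ in $\vec\Gamma$ ($t(\epsilon_k)=s(\epsilon_{k+1})$), with $\|\gamma\|=\sqrt{\mu(\gamma)}$, $\|\epsilon_1\cdots\epsilon_n\|=\sqrt{\mu(t(\epsilon_n))}$. The operator $\ell(\epsilon)$ acts by $\ell(\epsilon)\gamma=\delta_{t(\epsilon),\gamma}\epsilon$ and $\ell(\epsilon)(\epsilon_1\cdots\epsilon_n)=\epsilon\epsilon_1\cdots\epsilon_n$ if $t(\epsilon)=s(\epsilon_1)$ and $0$ otherwise; $\mathcal S(\Gamma,\mu)$ acts on $\mathcal H$ by left multiplication. $J$ is the modular conjugation, the antilinear isometry extending $\hat x\mapsto\widehat{x^*}$; concretely $J\gamma=\gamma$ and $J(\epsilon_1\cdots\epsilon_n)=\sqrt{\mu(t(\epsilon_n))/\mu(s(\epsilon_1))}\,\epsilon_n^{op}\cdots\epsilon_1^{op}$. For $\xi,\eta\in\mathcal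 H$, $|\xi\rangle\langle\eta|$ is the rank-one operator $\zeta\mapsto\xi\langle\eta|\zeta\rangle_{\mathcal H}$; vertices $s(\epsilon),t(\epsilon)$ are regarded as vectors in $\mathcal H$. *)

From mathcomp Require Import all_boot all_algebra.
From mathcomp Require Import reals complex.
Set Implicit Arguments. Unset Strict Implicit. Unset Printing Implicit Defensive.
Import GRing.Theory Num.Theory.
Local Open Scope ring_scope.
Local Open Scope complex_scope.

(* Graph data.  A finite graph Gamma is given by its DIRECTED version:         *)
(*   V : finType (vertices), E : finType (directed edges, the set \vec E),      *)
(*   s t : E -> V (source / target), op : E -> E (eps |-> eps^op),              *)
(* with op involutive, s (op e) = t e, t (op e) = s e, and op e = e exactly    *)
(* for the (single) directed loop coming from a loop of Gamma (these are       *)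
(* hypotheses of the theorem).  mu : V -> R is the weighting, R : realType,    *)
(* and the scalars are C = R[i].                                              *)
(* The Hilbert space H = F(X) (x)_C l^2(V,mu) has the orthogonal spanning set  *)
(* [basis] = vertices (paths of length 0) + nonempty paths eps_1..eps_n with   *)
(* t(eps_k) = s(eps_(k+1)); ||gamma||^2 = mu gamma, ||eps_1..eps_n||^2 =      *)
(* mu (t eps_n).  A vector xi = sum_b f b * b is represented by its            *)
(* coefficient function  f : basis -> C, and operators act on these.          *)

Section Fock.
Variables (R : realType) (V E : finType) (s t : E -> V) (op : E -> E)
          (mu : V -> R).

Local Notation C := R[i].

Definition is_pathw (w : seq E) : bool := sorted (fun e1 e2 => t e1 == s e2) w.

Definition paths := {p : E * seq E | is_pathw (p.1 :: p.2)}.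

Definition basis := (V + paths)%type.

Definition vec := basis -> C.
Definition oper := vec -> vec.

Definition bstart (b : basis) : V :=
  match b with inl v => v | inr p => s (val p).1 end.
Definition bend (b : basis) : V :=
  match b with inl v => v | inr p => t (last (val p).1 (val p).2) end.

Definition norm2 (b : basis) : R := mu (bend b).

Definition coefP (f : vec) (w : seq E) : C :=
  if w is e :: r then (if insub (e, r) is Some q then f (inr q) else 0) else 0.

Definition coefW (f : vec) (v : V) (w : seq E) : C :=
  if w is [::] then f (inl v) else coefP f w.

Definition bvec (b : basis) : vec := fun c => if c == b then 1 else 0.

(* <b | zeta>_H for a basis vector b (inner product linear in the right     *)
(* variable, the spanning set being orthogonal)                             *)
Definition inner_basis (b : basis) (zeta : vec) : C := (norm2 b)%:C * zeta b.

(* rank-one operator |xi><b| : zeta |-> xi <b|zeta> *)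
Definition rank1 (xi : vec) (b : basis) : oper :=
  fun zeta c => xi c * inner_basis b zeta.

(* creation operator l(eps): l(eps) gamma = delta_{t eps, gamma} eps,
   l(eps) (eps_1..eps_n) = eps eps_1 .. eps_n (0 if t eps <> s eps_1).
   In coefficients: (l(eps) f)(eps w) = coef of w (w empty = vertex t eps). *)
Definition lcr (eps : E) : oper := fun f b =>
  match b with
  | inl _ => 0
  | inr p => if (val p).1 == eps then coefW f (t eps) (val p).2 else 0
  end.

(* its adjoint l(eps)^* : eps w |-> w, eps |-> t(eps), other basis vectors |-> 0 *)
Definition lann (eps : E) : oper := fun f b =>
  match b with
  | inl v => if v == t eps then coefP f [:: eps] else 0
  | inr p => coefP f (eps :: (val p).1 :: (val p).2)
  end.

Definition pl (alpha : V) : oper := fun f b =>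
  if bstart b == alpha then f b else 0.

Definition oadd (A B : oper) : oper := fun f b => A f b + B f b.
Definition oscale (c : C) (A : oper) : oper := fun f b => c * A f b.
Definition ocomp (A B : oper) : oper := fun f => A (B f).
Definition comm (A B : oper) : oper := fun f b => A (B f) b - B (A f) b.

Definition root4 (x : R) : R := Num.sqrt (Num.sqrt x).

Definition a_coef (eps : E) : R := root4 (mu (s eps) / mu (t eps)).

(* X_e for the (undirected) edge e underlying eps (the formula is symmetric
   under eps <-> eps^op since a_(eps^op) = a_eps^-1) *)
Definition Xe (eps : E) : oper :=
  if op eps == eps then oadd (lcr eps) (lann eps)
  else
    let a := (a_coef eps)%:C in
    oadd (oadd (oscale a (lcr eps)) (oscale a^-1 (lann (op eps))))
         (oadd (oscale a^-1 (lcr (op eps))) (oscale a (lann eps))).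

Definition Xdir (eps : E) : oper := ocomp (pl (s eps)) (ocomp (Xe eps) (pl (t eps))).

Definition revw (w : seq E) : seq E := rev (map op w).

(* modular conjugation J (antilinear):
   J gamma = gamma,
   J (eps_1..eps_n) = sqrt(mu(t eps_n)/mu(s eps_1)) eps_n^op..eps_1^op.
   Coefficient of the basis element q in J f is conj(f_b) c_b with b = rev q. *)
Definition Jc (w : seq E) : R :=
  if w is e :: r then Num.sqrt (mu (t (last e r)) / mu (s e)) else 1.

Definition J : oper := fun f b =>
  match b with
  | inl v => (f (inl v))^*
  | inr p => let w := revw ((val p).1 :: (val p).2) in
             (coefP f w)^* * (Jc w)%:C
  end.

Definition Jconj (A : oper) : oper := ocomp J (ocomp A J).

Definition adjV : rel V := fun x y => [exists e, (s e == x) && (t e == y)].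
Definition graph_connected : Prop := forall x y : V, connect adjV x y.

End Fock.

From mathcomp Require Import all_boot all_order all_algebra.
From mathcomp Require Import reals complex boolp ring.
Set Implicit Arguments. Unset Strict Implicit. Unset Printing Implicit Defensive.
Import Order.TTheory GRing.Theory Num.Theory.
Local Open Scope complex_scope.
Local Open Scope ring_scope.

(* Conjugation by J turns left multiplications into right ones: J p_a J keeps
   the basis vectors ending at a, J l(d) J appends d^op at the end of a path
   and J l(d)^* J deletes a final d^op, up to the weights [Jc] that make J
   isometric.  Prepending an edge commutes with appending or deleting one at
   the end, with a single exception: deleting e from the one-edge path
   e = l(e) t(e) leaves the vertex s(e), which no vector l(e) xi can produce.
   So only the term a_e^-1 l(e^op)^* of [Xe e] contributes to the commutator
   of l(e) with J [Xdir e] J, and it gives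
   -a_e^-1 sqrt(mu(t e)/mu(s e)) mu(t e)^-1 |s(e)><t(e)|.  For e' <> e the
   only candidate, the term l(e')^* of [Xe e'] when e'^op = e, yields a
   multiple of the vertex t(e'), which J p_s(e') J kills since e' is not a
   loop. *)

Section FourthRoots.
Variable R : realType.

Lemma root4_expr4 (x : R) : 0 <= x -> root4 x ^+ 4 = x.
Proof.
by move=> x_ge0; rewrite /root4 -[4%N]/(2 * 2)%N exprM !sqr_sqrtr ?sqrtr_ge0.
Qed.

Lemma root4_1 : root4 1 = 1 :> R.
Proof. by rewrite /root4 !sqrtr1. Qed.

Lemma invr_root4_div_mul_sqrt (x y : R) : 0 < x -> 0 < y ->
  (root4 (x / y))^-1 * Num.sqrt (y / x) = (root4 (x ^+ 3 * y))^-1 * y.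
Proof.
move=> x_gt0 y_gt0; apply/eqP; rewrite -(@eqrXn2 _ 4) //; last first.
- by rewrite mulr_ge0 ?invr_ge0 ?sqrtr_ge0 ?ltW.
- by rewrite mulr_ge0 ?invr_ge0 ?sqrtr_ge0.
rewrite !exprMn !exprVn !root4_expr4 ?divr_ge0 ?mulr_ge0 ?exprn_ge0 ?ltW //.
rewrite -[4%N]/(2 * 2)%N exprM sqr_sqrtr ?divr_ge0 ?ltW //.
by apply/eqP; field; rewrite !gt_eqF.
Qed.

End FourthRoots.

Section Fock.
Variables (R : realType) (V E : finType) (s t : E -> V) (op : E -> E)
          (mu : V -> R).
Hypotheses (mu_gt0 : forall v, 0 < mu v) (opK : involutive op)
           (s_op : forall e, s (op e) = t e) (t_op : forall e, t (op e) = s e)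
           (op_fix : forall e, (op e == e) = (s e == t e)).

Local Notation C := R[i].
Local Notation vec := (vec R s t).
Local Notation oper := (oper R s t).
Local Notation basis := (basis s t).
Local Notation paths := (paths s t).
Local Notation pathw := (@is_pathw V E s t).
Local Notation revw := (@revw E op).
Local Notation coefP := (@coefP R V E s t).
Local Notation coefW := (@coefW R V E s t).
Local Notation lcr := (@lcr R V E s t).
Local Notation lann := (@lann R V E s t).
Local Notation pl := (@pl R V E s t).
Local Notation Jc := (@Jc R V E s t mu).
Local Notation J := (@J R V E s t op mu).
Local Notation Jconj := (@Jconj R V E s t op mu).

Lemma pathw_revw u : pathw (revw u) = pathw u.
Proof.
rewrite /is_pathw /revw rev_sorted sorted_map.
case: u => // e r /=; apply: eq_path => x y /=.
by rewrite s_op t_op eq_sym.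
Qed.

Lemma revwK : involutive revw.
Proof.
by move=> u; rewrite /revw map_rev revK -map_comp map_id_in // => x _ /=.
Qed.

Lemma revw_rcons u x : revw (rcons u x) = op x :: revw u.
Proof. by rewrite /revw map_rcons rev_rcons. Qed.

Lemma revw_cons e u : revw (e :: u) = rcons (revw u) (op e).
Proof. by rewrite /revw /= rev_cons. Qed.

Lemma revw_lastI e r : revw (e :: r) = op (last e r) :: revw (belast e r).
Proof. by rewrite lastI revw_rcons. Qed.

Lemma last_revw_belast e r : last (op (last e r)) (revw (belast e r)) = op e.
Proof. by case: r => [|y r] //=; rewrite revw_cons last_rcons. Qed.

Lemma pathw_behead e r : pathw (e :: r) -> pathw r.
Proof. by case: r => //= y r /andP[]. Qed.

Lemma pathw_belast u x : pathw (rcons u x) -> pathw u.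
Proof. by case: u => //= e r; rewrite /is_pathw /= rcons_path => /andP[]. Qed.

Lemma pathw_rcons_last e r x : pathw (rcons (e :: r) x) -> t (last e r) = s x.
Proof. by rewrite /is_pathw rcons_cons /= rcons_path => /andP[_ /eqP]. Qed.

Lemma pathw_cons_rcons e y r x : pathw (e :: y :: r) ->
  pathw (rcons (e :: y :: r) x) = pathw (rcons (y :: r) x).
Proof. by rewrite /is_pathw /= => /andP[-> _]. Qed.

Lemma coefP_npath f u : ~~ pathw u -> coefP f u = 0.
Proof.
case: u => // e r u_npath; rewrite /coefP; case: insubP => // q q_path _.
by case/negP: u_npath.
Qed.

Lemma coefP_val f (p : paths) : coefP f ((val p).1 :: (val p).2) = f (inr p).
Proof.
rewrite /coefP; case: insubP => [q _ q_p|/negP[]]; last exact: (valP p).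
by congr (f (inr _)); apply: val_inj; rewrite q_p; case: (val p).
Qed.

Lemma coefP_sig f e r (er_path : pathw (e :: r)) :
  f (inr (exist (fun p : E * seq E => pathw (p.1 :: p.2)) (e, r) er_path))
  = coefP f (e :: r).
Proof. exact: (esym (coefP_val f (exist _ (e, r) er_path))). Qed.

Lemma coefW_nil f v : coefW f v [::] = f (inl v).
Proof. by []. Qed.

Lemma coefW_cons f v e r : coefW f v (e :: r) = coefP f (e :: r).
Proof. by []. Qed.

Lemma coefW_rcons f v u x : coefW f v (rcons u x) = coefP f (rcons u x).
Proof. by case: u. Qed.

Lemma lcr_inl e f v : lcr e f (inl v) = 0.
Proof. by []. Qed.

Lemma coefP_add (f g : vec) u : coefP (fun b => f b + g b) u = coefP f u + coefP g u.
Proof. by case: u => [|e r]; rewrite /coefP ?addr0 //; case: insub; rewrite ?addr0. Qed.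

Lemma coefP_scale (c : C) (f : vec) u : coefP (fun b => c * f b) u = c * coefP f u.
Proof. by case: u => [|e r]; rewrite /coefP ?mulr0 //; case: insub; rewrite ?mulr0. Qed.

Lemma coefP_lcr d f u : coefP (lcr d f) u =
  if u is e :: r then (if pathw u && (e == d) then coefW f (t d) r else 0) else 0.
Proof.
case: u => [|e r] //; rewrite {1}/coefP.
case: insubP => [q /= -> q_er|/negbTE-> //].
by rewrite /lcr q_er.
Qed.

Lemma coefP_lann d f u : coefP (lann d f) u =
  if u is _ :: _ then (if pathw u then coefP f (d :: u) else 0) else 0.
Proof.
case: u => [|e r] //; rewrite {1}/coefP.
case: insubP => [q /= -> q_er|/negbTE-> //].
by rewrite /lann q_er.
Qed.

Lemma coefP_pl a f u : coefP (pl a f) u =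
  if u is e :: _ then (if s e == a then coefP f u else 0) else 0.
Proof.
case: u => [|e r] //; rewrite {1}/coefP.
case: insubP => [q _ q_er|er_npath]; last by rewrite coefP_npath // if_same.
have val_q : sval q = (e, r) := q_er.
by rewrite /pl /= -coefP_val val_q q_er.
Qed.

(* [J] spells conjugation as [conjc] on vertices and as [Num.conj] on paths.
   We rewrite with lemmas stated for [Num.conj] only: [rmorphM] would leave the
   morphism in a form that [conjCK] no longer matches. *)
Lemma conjcE (x : C) : conjc x = x^*.
Proof. by []. Qed.

Lemma conjC_real (x : R) : (x%:C)^* = x%:C.
Proof. exact: conjc_real. Qed.

Lemma conjCM (x y : C) : (x * y)^* = x^* * y^*.
Proof. exact: rmorphM. Qed.

Lemma coefP_J f u : coefP (J f) u = (coefP f (revw u))^* * (Jc (revw u))%:C.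
Proof.
case: u => [|e r]; first by rewrite /= conjC0 mul0r.
rewrite {1}/coefP; case: insubP => [q _ q_er|er_npath]; first by rewrite /J q_er.
by rewrite coefP_npath ?conjC0 ?mul0r // pathw_revw.
Qed.

Lemma sqrt_mu_divM (a b c : V) :
  Num.sqrt (mu a / mu b) * Num.sqrt (mu b / mu c) = Num.sqrt (mu a / mu c).
Proof.
rewrite -sqrtrM ?divr_ge0 ?ltW //.
by rewrite mulrA divfK // gt_eqF.
Qed.

Lemma Jc_revw e r : Jc (revw (e :: r)) = Num.sqrt (mu (s e) / mu (t (last e r))).
Proof. by rewrite revw_lastI /= last_revw_belast t_op s_op. Qed.

Lemma Jc_mul_revw u : u != [::] -> Jc u * Jc (revw u) = 1.
Proof.
case: u => // e r _; rewrite Jc_revw /= sqrt_mu_divM.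
by rewrite divff ?sqrtr1 // gt_eqF.
Qed.

Lemma Jc_mul_revw_rcons u x :
  pathw (rcons u x) -> Jc u * Jc (revw (rcons u x)) = Jc [:: op x].
Proof.
case: u => [_|e r /pathw_rcons_last tlast]; first by rewrite mul1r.
by rewrite rcons_cons Jc_revw last_rcons /= sqrt_mu_divM tlast s_op t_op.
Qed.

Lemma Jc_rcons_mul_revw e r y :
  pathw (rcons (e :: r) y) -> Jc (rcons (e :: r) y) * Jc (revw (e :: r)) = Jc [:: y].
Proof.
by move/pathw_rcons_last=> tlast; rewrite Jc_revw rcons_cons /= last_rcons sqrt_mu_divM tlast.
Qed.

Lemma conj_coefP_J_revw f u : (coefP (J f) (revw u))^* = coefP f u * (Jc u)%:C.
Proof.
rewrite coefP_J revwK conjCM conjCK conjC_real.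
by case: u => [|e r]; rewrite ?mul0r.
Qed.

Lemma conj_coefW_J_revw f v u : (coefW (J f) v (revw u))^* = coefW f v u * (Jc u)%:C.
Proof.
case: u => [|e r]; first by rewrite /= conjcE conjCK mulr1.
by rewrite revw_lastI coefW_cons -revw_lastI conj_coefP_J_revw.
Qed.

Lemma JK : involutive J.
Proof.
move=> f; apply: funext => -[v|p] /=; first by rewrite !conjcE conjCK.
by rewrite conj_coefP_J_revw coefP_val -mulrA -rmorphM Jc_mul_revw // mulr1.
Qed.

Lemma J_add (f g : vec) : J (fun b => f b + g b) = fun b => J f b + J g b.
Proof.
apply: funext => -[v|p] /=; first exact: rmorphD.
by rewrite !coefP_add rmorphD mulrDl.
Qed.

Lemma J_scale (c : C) (f : vec) : J (fun b => c * f b) = fun b => c^* * J f b.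
Proof.
apply: funext => -[v|p] /=; first exact: rmorphM.
by rewrite !coefP_scale rmorphM mulrA.
Qed.

Lemma Jconj_comp (X Y : oper) f : Jconj (ocomp X Y) f = Jconj X (Jconj Y f).
Proof. by rewrite /Jconj /ocomp JK. Qed.

Lemma Jconj_add (X Y : oper) f :
  Jconj (oadd X Y) f = fun b => Jconj X f b + Jconj Y f b.
Proof. by rewrite /Jconj /ocomp /oadd J_add. Qed.

Lemma Jconj_scale (c : C) (X : oper) f :
  Jconj (oscale c X) f = fun b => c^* * Jconj X f b.
Proof. by rewrite /Jconj /ocomp /oscale J_scale. Qed.

Definition pr (a : V) : oper := fun f b => if bend b == a then f b else 0.

Lemma Jconj_pl a f : Jconj (pl a) f = pr a f.
Proof.
apply: funext => -[v|[[e r] er_path]]; rewrite /Jconj /ocomp /pr /=.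
  by rewrite /pl /=; case: ifP; rewrite ?conjcK ?conjc0.
rewrite revw_lastI coefP_pl -revw_lastI s_op.
case: ifP => _; last by rewrite conjC0 mul0r.
by rewrite -(coefP_val f) conj_coefP_J_revw -mulrA -rmorphM Jc_mul_revw // mulr1.
Qed.

Lemma coefP_pr a f u : coefP (pr a f) u =
  if u is e :: r then (if t (last e r) == a then coefP f u else 0) else 0.
Proof.
case: u => [|e r] //; rewrite {1}/coefP.
case: insubP => [q _ q_er|er_npath]; last by rewrite coefP_npath // if_same.
have val_q : sval q = (e, r) := q_er.
by rewrite /pr /= -coefP_val val_q q_er.
Qed.

Lemma lcr_pr d a f : lcr d (pr a f) = pr a (lcr d f).
Proof.
apply: funext => -[v|[[e r] er_path]]; rewrite /pr /=; first by case: ifP.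
case: (e =P d) => [->|]; last by case: ifP.
case: r er_path => [|y r] //= _.
exact: (coefP_pr a f (y :: r)).
Qed.

Lemma lcr_add d (f g : vec) b : lcr d (fun b => f b + g b) b = lcr d f b + lcr d g b.
Proof.
case: b => [v|[[e r] er_path]] /=; first by rewrite addr0.
case: ifP => _; last by rewrite addr0.
by case: r er_path => [|y r] //; rewrite !coefW_cons coefP_add.
Qed.

Lemma lcr_scale d (c : C) (f : vec) b : lcr d (fun b => c * f b) b = c * lcr d f b.
Proof.
case: b => [v|[[e r] er_path]] /=; first by rewrite mulr0.
case: ifP => _; last by rewrite mulr0.
by case: r er_path => [|y r] //; rewrite !coefW_cons coefP_scale.
Qed.

Lemma coefP_Jconj_lcr d g u x : coefP (Jconj (lcr d) g) (rcons u x) =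
  if pathw (rcons u x) && (op x == d) then coefW g (t d) u * (Jc [:: d])%:C else 0.
Proof.
rewrite /Jconj /ocomp coefP_J revw_rcons coefP_lcr -revw_rcons pathw_revw.
case: ifP => [/andP[ux_path /eqP <-]|_]; last by rewrite conjC0 mul0r.
rewrite revw_rcons conj_coefW_J_revw -revw_rcons -mulrA -rmorphM.
by rewrite Jc_mul_revw_rcons.
Qed.

Lemma Jconj_lcr_inl d g v : Jconj (lcr d) g (inl v) = 0.
Proof. exact: conjc0. Qed.

Lemma lcr_Jconj_lcr e d g b : lcr e (Jconj (lcr d) g) b = Jconj (lcr d) (lcr e g) b.
Proof.
case: b => [v|[[e1 r] er_path]]; first by rewrite Jconj_lcr_inl.
rewrite !coefP_sig coefP_lcr er_path andTb.
case/lastP: r er_path => [|r x] er_path.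
  rewrite -[[:: e1]]/(rcons [::] e1) coefP_Jconj_lcr !coefW_nil Jconj_lcr_inl.
  by rewrite /= mul0r !if_same.
have rx_path : pathw (rcons r x) := pathw_behead er_path.
have erx_path : pathw (rcons (e1 :: r) x) := er_path.
rewrite -rcons_cons coefW_rcons !coefP_Jconj_lcr coefW_cons coefP_lcr erx_path.
rewrite rx_path (pathw_belast erx_path) !andTb.
case: (e1 =P e) => [e1_e|_]; last by rewrite mul0r !if_same.
case: (op x =P d) => [opx_d|//].
case: r er_path rx_path erx_path => [|y r] _ _ // /pathw_rcons_last te_sx.
by rewrite -opx_d t_op -e1_e te_sx.
Qed.

Lemma coefP_Jconj_lann d g e r : coefP (Jconj (lann d) g) (e :: r) =
  if pathw (rcons (e :: r) (op d))
  then coefP g (rcons (e :: r) (op d)) * (Jc [:: op d])%:C else 0.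
Proof.
rewrite /Jconj /ocomp coefP_J revw_lastI coefP_lann -revw_lastI pathw_revw.
have -> : d :: revw (e :: r) = revw (rcons (e :: r) (op d)) by rewrite revw_rcons opK.
have [ud_path|ud_npath] := boolP (pathw (rcons (e :: r) (op d))).
  by rewrite (pathw_belast ud_path) conj_coefP_J_revw -mulrA -rmorphM Jc_rcons_mul_revw.
case: ifP => _; last by rewrite conjC0 mul0r.
by rewrite conj_coefP_J_revw coefP_npath // !mul0r.
Qed.

Lemma Jconj_lann_inl d g v : Jconj (lann d) g (inl v) =
  if v == t d then coefP g [:: op d] * (Jc [:: op d])%:C else 0.
Proof.
rewrite /Jconj /ocomp /J /lann conjcE.
case: ifP => _; last exact: conjC0.
have -> : [:: d] = revw [:: op d] by rewrite /revw /= opK.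
exact: conj_coefP_J_revw.
Qed.

Lemma lcr_Jconj_lann_path e d g (p : paths) :
  lcr e (Jconj (lann d) g) (inr p) = Jconj (lann d) (lcr e g) (inr p).
Proof.
case: p => [[e1 r] er_path]; rewrite !coefP_sig coefP_lcr er_path andTb.
rewrite coefP_Jconj_lann rcons_cons coefP_lcr coefW_rcons -rcons_cons.
case: (e1 =P e) => [e1_e|_]; last by rewrite andbF mul0r if_same.
subst e1; case: r er_path => [|y r] er_path.
  have -> : pathw (rcons [:: e] (op d)) = (t e == t d).
    by rewrite /is_pathw /= s_op andbT.
  by rewrite coefW_nil Jconj_lann_inl andbT; case: ifP.
rewrite coefW_cons coefP_Jconj_lann pathw_cons_rcons // andbT.
by case: ifP.
Qed.

Lemma comm_lcr_Jconj_lann e d g b : comm (lcr e) (Jconj (lann d)) g b =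
  if (op d == e) && (b == inl (s e)) then - (g (inl (t e)) * (Jc [:: e])%:C) else 0.
Proof.
case: b => [v|p]; last by rewrite /comm lcr_Jconj_lann_path subrr andbF.
rewrite /comm lcr_inl Jconj_lann_inl coefP_lcr coefW_nil sub0r.
have -> : pathw [:: op d] by [].
case: (op d =P e) => [<-|_]; last by rewrite !andbF mul0r if_same oppr0.
have -> : (inl v == inl (s (op d)) :> basis) = (v == t d).
  by rewrite s_op; apply/eqP/eqP => [[]|->].
by rewrite !andTb; case: ifP; rewrite ?oppr0.
Qed.

Lemma comm_lcr_Jconj_add e X Y h b :
  comm (lcr e) (Jconj (oadd X Y)) h b
  = comm (lcr e) (Jconj X) h b + comm (lcr e) (Jconj Y) h b.
Proof. by rewrite /comm !Jconj_add lcr_add opprD addrACA. Qed.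

Lemma comm_lcr_Jconj_scale e c X h b :
  comm (lcr e) (Jconj (oscale c X)) h b = c^* * comm (lcr e) (Jconj X) h b.
Proof. by rewrite /comm !Jconj_scale lcr_scale -mulrBr. Qed.

Lemma comm_lcr_Jconj_lcr e d h b : comm (lcr e) (Jconj (lcr d)) h b = 0.
Proof. by rewrite /comm lcr_Jconj_lcr subrr. Qed.

Lemma comm_lcr_Jconj_Xdir e e' f b :
  comm (lcr e) (Jconj (Xdir op mu e')) f b =
  if bend b == s e' then comm (lcr e) (Jconj (Xe op mu e')) (pr (t e') f) b else 0.
Proof.
rewrite /comm /Xdir.
rewrite (Jconj_comp (pl (s e'))) (Jconj_comp (Xe op mu e')).
rewrite (Jconj_comp (pl (s e'))) (Jconj_comp (Xe op mu e')) !Jconj_pl.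
rewrite (lcr_pr e (s e')) -(lcr_pr e (t e')) /pr.
by case: ifP => _; rewrite ?subrr.
Qed.

Lemma a_coefV_mul_Jc e :
  (a_coef s t mu e)^-1 * Jc [:: e] = (root4 (mu (s e) ^+ 3 * mu (t e)))^-1 * mu (t e).
Proof. exact: invr_root4_div_mul_sqrt. Qed.

Lemma a_coef_loop e : op e = e -> a_coef s t mu e = 1.
Proof.
move/eqP; rewrite op_fix => /eqP ste.
by rewrite /a_coef ste divff ?gt_eqF // root4_1.
Qed.

Lemma comm_lcr_Jconj_Xe_self e h b :
  comm (lcr e) (Jconj (Xe op mu e)) h b =
  if b == inl (s e) then - ((a_coef s t mu e)^-1 * Jc [:: e])%:C * h (inl (t e)) else 0.
Proof.
rewrite /Xe; have [loop_e|nloop_e] := eqVneq (op e) e.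
  rewrite comm_lcr_Jconj_add comm_lcr_Jconj_lcr comm_lcr_Jconj_lann add0r loop_e eqxx.
  by rewrite a_coef_loop // invr1 mul1r mulrC mulNr; case: ifP.
rewrite !comm_lcr_Jconj_add !comm_lcr_Jconj_scale !comm_lcr_Jconj_lcr.
rewrite !comm_lcr_Jconj_lann opK eqxx (negbTE nloop_e) !mulr0 add0r !addr0.
rewrite -fmorphV conjC_real andTb; case: ifP => _; last by rewrite mulr0.
by rewrite rmorphM; ring.
Qed.

Lemma comm_lcr_Jconj_Xe_neq e e' h b : e' != e -> bend b == s e' ->
  comm (lcr e) (Jconj (Xe op mu e')) h b = 0.
Proof.
move=> e'_neq_e bend_b; rewrite /Xe; have [loop_e'|nloop_e'] := eqVneq (op e') e'.
  rewrite comm_lcr_Jconj_add comm_lcr_Jconj_lcr comm_lcr_Jconj_lann add0r loop_e'.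
  by rewrite (negbTE e'_neq_e).
rewrite !comm_lcr_Jconj_add !comm_lcr_Jconj_scale !comm_lcr_Jconj_lcr.
rewrite !comm_lcr_Jconj_lann opK (negbTE e'_neq_e) !mulr0 !add0r.
case: (op e' =P e) => [<-|_]; last by rewrite mulr0.
case: eqP => [b_eq|_]; last by rewrite mulr0.
by move: bend_b nloop_e'; rewrite b_eq s_op op_fix /= eq_sym => ->.
Qed.

Lemma comm_lcr_Jconj_Xdir_self e f :
  comm (lcr e) (Jconj (Xdir op mu e)) f
  = (fun b => - ((root4 (mu (s e) ^+ 3 * mu (t e)))^-1)%:C
              * rank1 mu (bvec R (inl (s e))) (inl (t e)) f b).
Proof.
apply: funext => b; rewrite comm_lcr_Jconj_Xdir comm_lcr_Jconj_Xe_self a_coefV_mul_Jc.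
rewrite /rank1 /bvec /inner_basis /norm2 /pr /=.
have [->|_] := eqVneq b (inl (s e)); last by case: ifP; rewrite mul0r mulr0.
by rewrite /= !eqxx mul1r !mulNr mulrA -rmorphM.
Qed.

Lemma comm_lcr_Jconj_Xdir_neq e e' f : e' != e ->
  comm (lcr e) (Jconj (Xdir op mu e')) f = (fun _ => 0).
Proof.
move=> e'_neq_e; apply: funext => b; rewrite comm_lcr_Jconj_Xdir.
by case: ifP => // bend_b; apply: comm_lcr_Jconj_Xe_neq.
Qed.

End Fock.

Theorem lemma3p4 (R : realType) (V E : finType) (s t : E -> V) (op : E -> E)
    (mu : V -> R)
    (mu_pos : forall v, 0 < mu v)
    (op_inv : involutive op)
    (s_op : forall e, s (op e) = t e)
    (t_op : forall e, t (op e) = s e)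
    (op_fix : forall e, (op e == e) = (s e == t e))
    (conn : graph_connected s t)
    (eps : E) :
  (forall f : vec R s t,
     comm (@lcr R V E s t eps) (Jconj op mu (Xdir op mu eps)) f
     = (fun b => - ((root4 (mu (s eps) ^+ 3 * mu (t eps)))^-1)%:C
                 * rank1 mu (bvec R (inl (s eps))) (inl (t eps)) f b))
  /\
  (forall eps' : E, eps' != eps -> forall f : vec R s t,
     comm (@lcr R V E s t eps) (Jconj op mu (Xdir op mu eps')) f = (fun _ => 0)).
Proof.
split=> [f | eps' eps'_neq f].
  exact: comm_lcr_Jconj_Xdir_self.
exact: comm_lcr_Jconj_Xdir_neq.
Qed.
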